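(* For any Markov system $\mathbb{M}=(a,b,[a],[b],[b^{-1}])$, the gaps of $X_\infty$ (components of $S^1\setminus X_\infty$) form a single orbit under the action of $\mathbb{G}(\mathbb{M})$.
   Context: A Markov system is a tuple $(a,b,[a],[b],[b^{-1}])$ with $a$ an orientation-preserving involution of $S^1$, $b$ an orientation-preserving homeomorphism of $S^1$ of period three, and $[a],[b],[b^{-1}]\subset S^1$ such that: (A) they are pairwise disjoint, each a union of $k$ disjoint closed intervals ($k\in\mathbb{N}$); components are $a$-, $b$-, $b^{-1}$-intervals; $X=[a]\cup[b]\cup[b^{-1}]$; (B) no two $a$-intervals are consecutive among the components of $X$ in circular order; likewise for $b$- and for $b^{-1}$-intervals; with principal gaps (gaps of $X$ between an $a$-interval and a $b^{\pm1}$-interval), complementary gaps (between a $b$- and a $b^{-1}$-interval), $b$-blocks (maximal intervals made of $b^{\pm1}$-intervals and complementary gaps) and $[[b]]$ the union of $b$-blocks: (C) $a([a])=[[b]]$; (D) $b([a])=[b]$, $b([b])=[b^{-1}]$; (E) $a$ maps principal gaps to principal gaps and exactly one of $b^{\pm1}$ maps a given principal gap to a principal gap; the graph on principal gaps joining $J$ to $a(J)$ and to that image is connected. $\mathbb{G}(\mathbb{M})$ is the subgroup of $\mathrm{Homeo}_+(S^1)$ generated by $a$ and $b$, and $X_\infty=\bigcap_{f\in\mathbb{G}(\mathbb{M})}f^{-1}(X)$. *)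

(* The circle S^1 is modelled as R/Z: a subset of S^1 is represented by a
   1-periodic subset of R, and an orientation-preserving homeomorphism of S^1
   by a lift R -> R (continuous, strictly increasing, F(x+1) = F(x)+1). *)
From Stdlib Require Import Reals Relations.
Open Scope R_scope.

Definition set := R -> Prop.

Definition same_pt (x y : R) : Prop := exists n : Z, y = x + IZR n.

Definition homeo_lift (f : R -> R) : Prop :=
  continuity f /\ (forall x y, x < y -> f x < f y) /\ (forall x, f (x + 1) = f x + 1).

Definition involution (f : R -> R) : Prop :=
  (forall x, same_pt (f (f x)) x) /\ (exists x, ~ same_pt (f x) x).

Definition period_three (f : R -> R) : Prop :=
  (forall x, same_pt (f (f (f x))) x) /\ (exists x, ~ same_pt (f x) x).

Definition periodize (S : set) : set := fun t => exists n : Z, S (t + IZR n).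

Definition arc (x y : R) : set := periodize (fun t => x <= t <= y).

Definition union_of_arcs (k : nat) (S : set) : Prop :=
  exists l r : nat -> R,
    (forall i, (i < k)%nat -> l i < r i < l i + 1) /\
    (forall i j, (i < k)%nat -> (j < k)%nat -> i <> j ->
        forall t, ~ (arc (l i) (r i) t /\ arc (l j) (r j) t)) /\
    (forall t, S t <-> exists i, (i < k)%nat /\ arc (l i) (r i) t).

Definition comp_R (Y : set) (x : R) : set :=
  fun y => forall t, Rmin x y <= t <= Rmax x y -> Y t.

Definition is_comp (Y : set) (C : set) : Prop :=
  exists x, Y x /\ C = periodize (comp_R Y x).

Definition compl (Y : set) : set := fun t => ~ Y t.
Definition image (f : R -> R) (S : set) : set := fun y => exists x, S x /\ y = f x.
Definition preim (f : R -> R) (S : set) : set := fun x => S (f x).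

Definition touches (I G : set) : Prop :=
  exists p, I p /\ forall e, 0 < e -> exists q, G q /\ Rabs (p - q) < e.

Section Markov.
Variables (a b : R -> R) (A B Bi : set).

Definition Xset : set := fun t => A t \/ B t \/ Bi t.
Definition gapX (G : set) : Prop := is_comp (compl Xset) G.

(* two distinct components of X are consecutive in circular order *)
Definition consecutive (I J : set) : Prop :=
  I <> J /\ exists G, gapX G /\ touches I G /\ touches J G.

Definition principal_gap (G : set) : Prop :=
  gapX G /\ exists I J, is_comp A I /\ (is_comp B J \/ is_comp Bi J) /\
                        touches I G /\ touches J G.

Definition complementary_gap (G : set) : Prop :=
  gapX G /\ exists I J, is_comp B I /\ is_comp Bi J /\ touches I G /\ touches J G.

Definition bstuff : set := fun t => B t \/ Bi t \/ exists G, complementary_gap G /\ G t.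
Definition b_block (K : set) : Prop := is_comp bstuff K.
Definition bb : set := fun t => exists K, b_block K /\ K t.

Definition pg_edge (J K : set) : Prop :=
  principal_gap J /\ principal_gap K /\
  (K = image a J \/ (principal_gap (image b J) /\ K = image b J)
                 \/ (principal_gap (preim b J) /\ K = preim b J)).

Definition markov_system : Prop :=
  homeo_lift a /\ homeo_lift b /\ involution a /\ period_three b /\
  (forall t, ~ (A t /\ B t)) /\ (forall t, ~ (A t /\ Bi t)) /\ (forall t, ~ (B t /\ Bi t)) /\
  (exists k, (1 <= k)%nat /\ union_of_arcs k A /\ union_of_arcs k B /\ union_of_arcs k Bi) /\
  (forall I J, is_comp A I -> is_comp A J -> ~ consecutive I J) /\
  (forall I J, is_comp B I -> is_comp B J -> ~ consecutive I J) /\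
  (forall I J, is_comp Bi I -> is_comp Bi J -> ~ consecutive I J) /\
  image a A = bb /\
  image b A = B /\ image b B = Bi /\
  (forall J, principal_gap J -> principal_gap (image a J)) /\
  (forall J, principal_gap J ->
     (principal_gap (image b J) <-> ~ principal_gap (preim b J))) /\
  (forall J K, principal_gap J -> principal_gap K -> clos_refl_sym_trans _ pg_edge J K).

Inductive in_G : (R -> R) -> Prop :=
| G_id : in_G (fun x => x)
| G_a : in_G a
| G_b : in_G b
| G_comp f g : in_G f -> in_G g -> in_G (fun x => f (g x))
| G_inv f g : in_G f -> (forall x, g (f x) = x) -> (forall x, f (g x) = x) -> in_G g.

Definition X_inf : set := fun x => forall f, in_G f -> Xset (f x).

End Markov.

(* The group G(M) permutes the components of the complement of X_inf, so it is
   enough to connect any two points outside X_inf by group elements and by moves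
   inside a gap of X (which lies inside a gap of X_inf).  A point outside X_inf is
   sent outside X by some group element.  By (B) the two ends of a gap of X are of
   different types: if one lies in [a] the gap is principal; otherwise the gap is
   complementary and, by (D), meets the b-image of a principal gap.  Finally, by
   (E) all principal gaps are linked by a, b and b^-1. *)

From Stdlib Require Import Reals Relations Lra Lia Classical.
From Stdlib Require Import FunctionalExtensionality PropExtensionality ClassicalEpsilon.
Open Scope R_scope.

Lemma set_ext (S T : set) : (forall t, S t <-> T t) -> S = T.
Proof.
  intros H. apply functional_extensionality; intros t.
  apply propositional_extensionality, H.
Qed.

Definition periodic (Y : set) : Prop := forall t n, Y (t + IZR n) <-> Y t.

Lemma periodize_periodic (S : set) : periodic (periodize S).
Proof.
  intros t n; split; intros [m Hm].
  - exists (n + m)%Z. rewrite plus_IZR, <- Rplus_assoc. exact Hm.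
  - exists (m - n)%Z. rewrite minus_IZR.
    replace (t + IZR n + (IZR m - IZR n)) with (t + IZR m) by ring. exact Hm.
Qed.

Lemma compl_periodic (Y : set) : periodic Y -> periodic (compl Y).
Proof. intros HY t n. unfold compl. rewrite (HY t n). tauto. Qed.

Lemma exists_shift_into (x lo : R) : exists n, lo < x + IZR n <= lo + 1.
Proof. exists (up (lo - x)). destruct (archimed (lo - x)). lra. Qed.

Definition strictly_between (x y t : R) : Prop := x < t < y \/ y < t < x.

Lemma comp_R_iff (Y : set) x y :
  comp_R Y x y <-> (forall t, x <= t <= y \/ y <= t <= x -> Y t).
Proof.
  unfold comp_R, Rmin, Rmax.
  split; intros H t Ht; apply H; destruct (Rle_dec x y); lra.
Qed.

Lemma comp_R_refl (Y : set) x : Y x -> comp_R Y x x.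
Proof. intros H. apply comp_R_iff. intros t Ht. replace t with x by lra. exact H. Qed.

Lemma comp_R_sym (Y : set) x y : comp_R Y x y -> comp_R Y y x.
Proof. rewrite !comp_R_iff. intros H t Ht. apply H. lra. Qed.

Lemma comp_R_trans (Y : set) x y z : comp_R Y x y -> comp_R Y y z -> comp_R Y x z.
Proof.
  rewrite !comp_R_iff. intros H1 H2 t Ht.
  destruct (Rle_dec t y); destruct Ht; first [apply H1; lra | apply H2; lra].
Qed.

Lemma comp_R_mono (Y Z : set) x y :
  (forall t, Y t -> Z t) -> comp_R Y x y -> comp_R Z x y.
Proof. rewrite !comp_R_iff. intros HYZ H t Ht. apply HYZ, H, Ht. Qed.

Lemma comp_R_shift (Y : set) x y n :
  periodic Y -> comp_R Y (x + IZR n) y <-> comp_R Y x (y - IZR n).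
Proof.
  intros HY. rewrite !comp_R_iff. split; intros H t Ht.
  - rewrite <- (HY t n). apply H. lra.
  - replace t with (t - IZR n + IZR n) by ring. apply HY, H. lra.
Qed.

Definition component (Y : set) (x : R) : set := periodize (comp_R Y x).

Lemma component_self (Y : set) x : Y x -> component Y x x.
Proof. intros H. exists 0%Z. rewrite Rplus_0_r. apply comp_R_refl, H. Qed.

Lemma is_comp_component (Y : set) x : Y x -> is_comp Y (component Y x).
Proof. intros H. exists x. split; [exact H | reflexivity]. Qed.

Lemma component_eq (Y : set) x y : comp_R Y x y -> component Y y = component Y x.
Proof.
  intros H. apply set_ext. intros t. split; intros [n Hn]; exists n.
  - exact (comp_R_trans Y x y _ H Hn).
  - exact (comp_R_trans Y y x _ (comp_R_sym Y x y H) Hn).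
Qed.

Lemma component_shift (Y : set) x n :
  periodic Y -> component Y (x + IZR n) = component Y x.
Proof.
  intros HY. apply set_ext. intros t. split; intros [m Hm].
  - rewrite comp_R_shift in Hm by exact HY. exists (m - n)%Z.
    rewrite minus_IZR. replace (t + (IZR m - IZR n)) with (t + IZR m - IZR n) by ring.
    exact Hm.
  - exists (m + n)%Z. rewrite comp_R_shift by exact HY. rewrite plus_IZR.
    replace (t + (IZR m + IZR n) - IZR n) with (t + IZR m) by ring. exact Hm.
Qed.

Lemma component_eq_of_mem (Y : set) x y :
  periodic Y -> component Y x y -> component Y y = component Y x.
Proof.
  intros HY [n Hn]. rewrite <- (component_shift Y y n HY). apply component_eq, Hn.
Qed.

Lemma component_mono (Y Z : set) x y :
  (forall t, Y t -> Z t) -> component Y x y -> component Z x y.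
Proof. intros HYZ [n Hn]. exists n. exact (comp_R_mono Y Z x _ HYZ Hn). Qed.

Definition bij_lift (f : R -> R) : Prop :=
  strict_increasing f /\ (forall x, f (x + 1) = f x + 1) /\
  exists g, (forall x, g (f x) = x) /\ (forall x, f (g x) = x).

Lemma strict_increasing_le f x y : strict_increasing f -> f x <= f y <-> x <= y.
Proof.
  intros Hf. split; intros H.
  - destruct (Rle_dec x y) as [|Hyx]; [assumption|].
    assert (f y < f x) by (apply Hf; lra). lra.
  - destruct (Req_dec x y) as [->|]; [lra|]. left. apply Hf. lra.
Qed.

Lemma strict_increasing_between f x y t :
  strict_increasing f -> strictly_between x y t -> strictly_between (f x) (f y) (f t).
Proof.
  intros Hf [Ht|Ht]; [left|right]; split; apply Hf; lra.
Qed.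

Lemma lift_shift f :
  (forall x, f (x + 1) = f x + 1) -> forall n x, f (x + IZR n) = f x + IZR n.
Proof.
  intros H1 n. induction n as [|n IH|n IH] using Z.peano_ind; intros x.
  - rewrite !Rplus_0_r. reflexivity.
  - rewrite succ_IZR, <- !Rplus_assoc, H1, IH. reflexivity.
  - rewrite <- Z.sub_1_r, minus_IZR.
    replace (x + (IZR n - 1)) with (x - 1 + IZR n) by ring.
    rewrite IH. specialize (H1 (x - 1)). replace (x - 1 + 1) with x in H1 by ring. lra.
Qed.

Lemma comp_R_bij_lift (Y : set) f x z :
  bij_lift f -> (forall t, Y (f t) <-> Y t) -> comp_R Y (f x) (f z) <-> comp_R Y x z.
Proof.
  intros [Hf [_ [g [_ Hfg]]]] HY.
  assert (Hseg : forall s, (f x <= f s <= f z \/ f z <= f s <= f x) <-> (x <= s <= z \/ z <= s <= x))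
    by (intros s; rewrite !(strict_increasing_le f _ _ Hf); reflexivity).
  rewrite !comp_R_iff. split; intros H t Ht.
  - rewrite <- HY. apply H, Hseg, Ht.
  - rewrite <- (Hfg t), HY. apply H, Hseg. rewrite Hfg. exact Ht.
Qed.

Lemma image_component (Y : set) f x :
  bij_lift f -> periodic Y -> (forall t, Y (f t) <-> Y t) ->
  image f (component Y x) = component Y (f x).
Proof.
  intros Hf HP HY. pose proof Hf as [_ [H1 [g [Hgf Hfg]]]].
  pose proof (lift_shift f H1) as Hs.
  apply set_ext. intros y. split.
  - intros [z [[n Hz] ->]]. exists n. rewrite <- Hs. apply comp_R_bij_lift; assumption.
  - intros [n Hn]. exists (g (y + IZR n) - IZR n). split.
    + exists n. replace (g (y + IZR n) - IZR n + IZR n) with (g (y + IZR n)) by ring.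
      apply (comp_R_bij_lift Y f); [assumption .. |]. rewrite Hfg. exact Hn.
    + replace (g (y + IZR n) - IZR n) with (g (y + IZR n) + IZR (- n)) by (rewrite opp_IZR; ring).
      rewrite Hs, Hfg, opp_IZR. ring.
Qed.
Lemma closed_set_iff (X : set) :
  closed_set X <-> forall h, ~ X h -> exists e, 0 < e /\ forall t, Rabs (t - h) < e -> ~ X t.
Proof.
  split; intros HX h Hh.
  - destruct (HX h Hh) as [e He]. exists e. split; [apply cond_pos | exact He].
  - destruct (HX h Hh) as [e [He Ht]]. exists (mkposreal e He). exact Ht.
Qed.

Lemma closed_set_or (S T : set) :
  closed_set S -> closed_set T -> closed_set (fun t => S t \/ T t).
Proof.
  rewrite !closed_set_iff. intros HS HT h Hh.
  destruct (HS h) as [e1 [He1 H1]]; [tauto|]. destruct (HT h) as [e2 [He2 H2]]; [tauto|].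
  exists (Rmin e1 e2). split; [apply Rmin_glb_lt; assumption|].
  intros t Ht. pose proof (Rmin_l e1 e2). pose proof (Rmin_r e1 e2).
  intros [Hs|Hs]; [apply (H1 t) | apply (H2 t)]; first [assumption | lra].
Qed.

Lemma closed_set_finite_union (F : nat -> set) k :
  (forall i, (i < k)%nat -> closed_set (F i)) ->
  closed_set (fun t => exists i, (i < k)%nat /\ F i t).
Proof.
  induction k as [|k IH]; intros HF.
  - apply closed_set_iff. intros h _. exists 1. split; [lra|]. intros t _ [i [Hi _]]. lia.
  - replace (fun t => exists i, (i < S k)%nat /\ F i t)
      with (fun t => (exists i, (i < k)%nat /\ F i t) \/ F k t).
    + apply closed_set_or; [apply IH; intros i Hi|]; apply HF; lia.
    + apply set_ext. intros t. split.
      * intros [[i [Hi Ht]]|Ht]; [exists i | exists k]; split; first [lia | assumption].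
      * intros [i [Hi Ht]]. destruct (Nat.eq_dec i k) as [->|Hik]; [right; exact Ht|].
        left. exists i. split; [lia | exact Ht].
Qed.

Lemma arc_closed l r : closed_set (arc l r).
Proof.
  apply closed_set_iff. intros h Hh.
  destruct (exists_shift_into l (h - 1)) as [n Hn].
  assert (Hr : r + IZR n < h).
  { destruct (Rlt_dec (r + IZR n) h) as [|Hrh]; [assumption|]. exfalso. apply Hh.
    exists (- n)%Z. rewrite opp_IZR. lra. }
  exists (Rmin (h - (r + IZR n)) (l + IZR n + 1 - h)).
  split; [apply Rmin_glb_lt; lra|].
  intros t Ht [m Hm]. apply Rabs_def2 in Ht.
  pose proof (Rmin_l (h - (r + IZR n)) (l + IZR n + 1 - h)).
  pose proof (Rmin_r (h - (r + IZR n)) (l + IZR n + 1 - h)).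
  destruct (Z.le_gt_cases (- m) n) as [Hm'|Hm'].
  - apply IZR_le in Hm'. rewrite opp_IZR in Hm'. lra.
  - assert (Hm2 : (n + 1 <= - m)%Z) by lia. apply IZR_le in Hm2.
    rewrite plus_IZR, opp_IZR in Hm2. lra.
Qed.

Lemma union_of_arcs_closed k (S : set) : union_of_arcs k S -> closed_set S.
Proof.
  intros [l [r [_ [_ HS]]]]. rewrite (set_ext _ _ HS).
  apply closed_set_finite_union. intros i _. apply arc_closed.
Qed.

Lemma union_of_arcs_periodic k (S : set) : union_of_arcs k S -> periodic S.
Proof.
  intros [l [r [_ [_ HS]]]] t n. rewrite !HS.
  split; intros [i [Hi Ht]]; exists i; split; try exact Hi; apply (periodize_periodic _ t n), Ht.
Qed.

Lemma union_of_arcs_inhabited k (S : set) : (1 <= k)%nat -> union_of_arcs k S -> exists x, S x.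
Proof.
  intros Hk [l [r [Hlr [_ HS]]]]. exists (l 0%nat). apply HS. exists 0%nat. split; [lia|].
  exists 0%Z. specialize (Hlr 0%nat ltac:(lia)). rewrite Rplus_0_r. lra.
Qed.

Definition is_gap (X : set) (lo hi : R) : Prop :=
  lo < hi /\ X lo /\ X hi /\ forall t, lo < t < hi -> ~ X t.

Lemma gap_right_end (X : set) p :
  closed_set X -> periodic X -> (exists x, X x) -> ~ X p ->
  exists hi, p < hi /\ X hi /\ forall t, p <= t < hi -> ~ X t.
Proof.
  intros HX HP [x Hx] Hp. rewrite closed_set_iff in HX.
  set (E := fun s => forall t, p <= t <= s -> ~ X t).
  destruct (exists_shift_into x p) as [n Hn].
  assert (Hbound : bound E).
  { exists (x + IZR n). intros s Hs. destruct (Rle_dec s (x + IZR n)) as [|Hsn]; [assumption|].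
    exfalso. apply (Hs (x + IZR n)); [lra | apply HP, Hx]. }
  assert (Hp' : E p) by (intros t Ht; replace t with p by lra; exact Hp).
  destruct (completeness E Hbound (ex_intro _ p Hp')) as [hi [Hub Hlub]].
  assert (Hfree : forall t, p <= t < hi -> ~ X t).
  { intros t Ht. destruct (classic (exists s, E s /\ t < s)) as [[s [Hs Hts]]|Hno].
    - apply Hs. lra.
    - exfalso. assert (hi <= t); [|lra]. apply Hlub. intros s Hs.
      apply Rnot_lt_le. intros Hts. apply Hno. exists s. split; assumption. }
  destruct (HX p Hp) as [e [He Hball]].
  assert (p + e / 2 <= hi).
  { apply Hub. intros t Ht. apply Hball, Rabs_def1; lra. }
  exists hi. split; [lra|]. split; [|exact Hfree].
  apply NNPP. intros Hhi. destruct (HX hi Hhi) as [e' [He' Hball']].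
  assert (hi + e' / 2 <= hi); [|lra].
  apply Hub. intros t Ht. destruct (Rlt_dec t hi).
  - apply Hfree. lra.
  - apply Hball', Rabs_def1; lra.
Qed.

Lemma gap_around (X : set) p :
  closed_set X -> periodic X -> (exists x, X x) -> ~ X p ->
  exists lo hi, is_gap X lo hi /\ lo < p < hi.
Proof.
  intros HX HP [x Hx] Hp.
  destruct (gap_right_end X p HX HP (ex_intro _ x Hx) Hp) as [hi [Hphi [Xhi Hright]]].
  destruct (gap_right_end (fun t => X (- t)) (- p)) as [lo' [Hplo [Xlo Hleft]]].
  - rewrite closed_set_iff in *. intros h Hh. destruct (HX (- h) Hh) as [e [He Hball]].
    exists e. split; [exact He|]. intros t Ht. apply Hball.
    replace (- t - - h) with (- (t - h)) by ring. rewrite Rabs_Ropp. exact Ht.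
  - intros t n. replace (- (t + IZR n)) with (- t + IZR (- n)) by (rewrite opp_IZR; ring). apply HP.
  - exists (- x). rewrite Ropp_involutive. exact Hx.
  - rewrite Ropp_involutive. exact Hp.
  - exists (- lo'), hi. repeat split; try lra; try assumption.
    intros t Ht. destruct (Rle_dec t p).
    + rewrite <- (Ropp_involutive t). apply Hleft. lra.
    + apply Hright. lra.
Qed.

Lemma gap_beside (X : set) q u :
  closed_set X -> periodic X -> X q -> X u -> q <> u ->
  (exists e, 0 < e /\ forall t, Rabs (t - q) < e -> strictly_between q u t -> ~ X t) ->
  exists lo hi, is_gap X lo hi /\ (lo = q /\ hi <= u \/ hi = q /\ u <= lo).
Proof.
  intros HX HP Xq Xu Hqu [e [He Hnear]].
  set (d := Rmin e (Rabs (u - q))).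
  assert (Hd : 0 < d <= e /\ d <= Rabs (u - q)).
  { unfold d. split; [split|]; [apply Rmin_glb_lt; [lra | apply Rabs_pos_lt, Rminus_eq_contra; auto]
                                | apply Rmin_l | apply Rmin_r]. }
  assert (Hfree : forall t, 0 < Rabs (t - q) <= d / 2 -> strictly_between q u t -> ~ X t)
    by (intros t Ht; apply Hnear; lra).
  destruct (Rdichotomy _ _ Hqu) as [Hlt|Hgt].
  - rewrite Rabs_right in Hd by lra.
    assert (Hs : ~ X (q + d / 2)).
    { apply Hfree; [rewrite Rabs_right|]; unfold strictly_between; lra. }
    destruct (gap_around X _ HX HP (ex_intro _ q Xq) Hs) as [lo [hi [Hg Hlh]]].
    pose proof Hg as [_ [Xlo [_ Hgap]]].
    exists lo, hi. split; [exact Hg|]. left. split.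
    + destruct (Rtotal_order lo q) as [Hl|[Hl|Hl]]; [exfalso .. | exact Hl | exfalso].
      * apply (Hgap q); [lra | exact Xq].
      * apply (Hfree lo); [rewrite Rabs_right|..]; unfold strictly_between; first [lra | exact Xlo].
    + apply Rnot_lt_le. intros Hhi. apply (Hgap u); [lra | exact Xu].
  - rewrite Rabs_left in Hd by lra.
    assert (Hs : ~ X (q - d / 2)).
    { apply Hfree; [rewrite Rabs_left|]; unfold strictly_between; lra. }
    destruct (gap_around X _ HX HP (ex_intro _ q Xq) Hs) as [lo [hi [Hg Hlh]]].
    pose proof Hg as [_ [_ [Xhi Hgap]]].
    exists lo, hi. split; [exact Hg|]. right. split.
    + destruct (Rtotal_order hi q) as [Hh|[Hh|Hh]]; [exfalso | exact Hh | exfalso].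
      * apply (Hfree hi); [rewrite Rabs_left|..]; unfold strictly_between; first [lra | exact Xhi].
      * apply (Hgap q); [lra | exact Xq].
    + apply Rnot_lt_le. intros Hlo. apply (Hgap u); [lra | exact Xu].
Qed.

Lemma homeo_lift_surj f : homeo_lift f -> forall y, exists x, f x = y.
Proof.
  intros [Hc [_ H1]] y. pose proof (lift_shift f H1) as Hs.
  set (m := up (Rabs (y - f 0))). destruct (archimed (Rabs (y - f 0))) as [Hm _].
  pose proof (Rle_abs (y - f 0)). pose proof (Rle_abs (- (y - f 0))). rewrite Rabs_Ropp in *.
  assert (Hup : f (IZR m) = f 0 + IZR m) by (rewrite <- Hs, Rplus_0_l; reflexivity).
  assert (Hdown : f (- IZR m) = f 0 - IZR m).
  { replace (- IZR m) with (0 + IZR (- m)) by (rewrite opp_IZR; ring). rewrite Hs, opp_IZR. ring. }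
  assert (Hc' : continuity (fun x => f x - y))
    by (apply continuity_minus; [exact Hc | apply continuity_const; intros ? ?; reflexivity]).
  destruct (IVT_cor (fun x => f x - y) (- IZR m) (IZR m) Hc') as [z [_ Hz]].
  - fold m in Hm. lra.
  - rewrite Hup, Hdown. fold m in Hm. nra.
  - exists z. lra.
Qed.

Lemma homeo_lift_bij f : homeo_lift f -> bij_lift f.
Proof.
  intros Hf. pose proof (homeo_lift_surj f Hf) as Hsurj. destruct Hf as [_ [Hinc H1]].
  set (g y := proj1_sig (constructive_indefinite_description _ (Hsurj y))).
  assert (Hfg : forall y, f (g y) = y) by (intros y; exact (proj2_sig (constructive_indefinite_description _ (Hsurj y)))).
  split; [exact Hinc|]. split; [exact H1|]. exists g. split; [|exact Hfg].
  intros x. apply Rle_antisym; apply (strict_increasing_le f _ _ Hinc); rewrite Hfg; lra.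
Qed.

Lemma in_G_bij_lift a b f : homeo_lift a -> homeo_lift b -> in_G a b f -> bij_lift f.
Proof.
  intros Ha Hb Hf. induction Hf as [| | |f g _ [Hf [Hf1 [f' [Hf2 Hf3]]]] _ [Hg [Hg1 [g' [Hg2 Hg3]]]]
                                   |f g _ [Hf [Hf1 _]] Hgf Hfg].
  - split; [intros x y Hxy; exact Hxy|]. split; [reflexivity|]. exists (fun x => x). split; reflexivity.
  - apply homeo_lift_bij, Ha.
  - apply homeo_lift_bij, Hb.
  - split; [intros x y Hxy; apply Hf, Hg, Hxy|]. split; [intros x; rewrite Hg1, Hf1; reflexivity|].
    exists (fun x => g' (f' x)). split; intros x; [rewrite Hf2, Hg2 | rewrite Hg3, Hf3]; reflexivity.
  - split.
    + intros x y Hxy. rewrite <- (Hfg x), <- (Hfg y) in Hxy.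
      destruct (Rlt_dec (g x) (g y)) as [|Hyx]; [assumption|].
      assert (f (g y) <= f (g x)) by (apply (strict_increasing_le f _ _ Hf); lra). lra.
    + split; [|exists f; split; assumption].
      intros x. rewrite <- (Hgf (g x + 1)), Hf1, Hfg. reflexivity.
Qed.

Lemma in_G_inv a b h : homeo_lift a -> homeo_lift b -> in_G a b h ->
  exists g, in_G a b g /\ (forall x, g (h x) = x) /\ (forall x, h (g x) = x).
Proof.
  intros Ha Hb Hh. destruct (in_G_bij_lift a b h Ha Hb Hh) as [_ [_ [g [Hgh Hhg]]]].
  exists g. split; [apply (G_inv a b h g Hh Hgh Hhg) | split; assumption].
Qed.

Lemma X_inf_subset a b A B Bi t : X_inf a b A B Bi t -> Xset A B Bi t.
Proof. intros H. exact (H (fun x => x) (G_id a b)). Qed.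

Lemma X_inf_invariant a b A B Bi h : homeo_lift a -> homeo_lift b -> in_G a b h ->
  forall t, X_inf a b A B Bi (h t) <-> X_inf a b A B Bi t.
Proof.
  intros Ha Hb Hh t. destruct (in_G_inv a b h Ha Hb Hh) as [g [Hg [Hgh _]]]. split.
  - intros HX f Hf. specialize (HX (fun x => f (g x)) (G_comp a b f g Hf Hg)).
    simpl in HX. rewrite Hgh in HX. exact HX.
  - intros HX f Hf. exact (HX (fun x => f (h x)) (G_comp a b f h Hf Hh)).
Qed.

Lemma X_inf_periodic a b A B Bi : homeo_lift a -> homeo_lift b -> periodic (Xset A B Bi) ->
  periodic (X_inf a b A B Bi).
Proof.
  intros Ha Hb HP t n.
  split; intros HX f Hf; destruct (in_G_bij_lift a b f Ha Hb Hf) as [_ [Hf1 _]];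
    specialize (HX f Hf); rewrite (lift_shift f Hf1) in *; apply (HP (f t) n), HX.
Qed.

Lemma gap_component (X : set) lo hi s y :
  is_gap X lo hi -> lo < s < hi -> lo < y < hi -> component (compl X) s y.
Proof.
  intros [_ [_ [_ Hfree]]] Hs Hy. exists 0%Z. rewrite Rplus_0_r, comp_R_iff.
  intros t Ht. apply Hfree. lra.
Qed.

Lemma gap_touches_end (X I : set) lo hi s p :
  is_gap X lo hi -> lo < s < hi -> p = lo \/ p = hi -> I p ->
  touches I (component (compl X) s).
Proof.
  intros Hg Hs Hp HI. pose proof Hg as [Hlh _]. exists p. split; [exact HI|]. intros e He.
  set (d := Rmin e (hi - lo) / 2).
  assert (0 < d < e /\ d < hi - lo).
  { pose proof (Rmin_l e (hi - lo)). pose proof (Rmin_r e (hi - lo)).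
    assert (0 < Rmin e (hi - lo)) by (apply Rmin_glb_lt; lra). unfold d. lra. }
  destruct Hp as [->| ->]; [exists (lo + d) | exists (hi - d)];
    (split; [apply (gap_component X lo hi); first [exact Hg | lra] | apply Rabs_def1; lra]).
Qed.

Lemma gap_ends_distinct_components (X S : set) lo hi :
  periodic X -> periodic S -> (forall t, S t -> X t) -> (exists x, X x /\ ~ S x) ->
  is_gap X lo hi -> S lo -> component S lo <> component S hi.
Proof.
  intros HPX HPS HSX [x [Xx Sx]] [Hlh [Xlo [_ Hfree]]] Slo Heq.
  assert (Hhi : hi <= lo + 1).
  { apply Rnot_lt_le. intros H. apply (Hfree (lo + 1)); [lra | apply (HPX lo 1%Z), Xlo]. }
  assert (Hlo : component S hi lo) by (rewrite <- Heq; apply component_self, Slo).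
  destruct Hlo as [n Hn]. rewrite comp_R_iff in Hn.
  (* Otherwise S would cover the whole circle outside the gap, leaving no room
     for a point of X outside S. *)
  destruct (Rlt_dec (lo + IZR n) hi) as [Hlt|Hge].
  - assert (Hn0 : IZR n <= 0).
    { apply IZR_le. assert (IZR n < IZR 1) as H%lt_IZR by lra. lia. }
    apply (Hfree ((lo + hi) / 2)); [lra|]. apply HSX, Hn. lra.
  - assert (Hn1 : 1 <= IZR n).
    { apply IZR_le. assert (IZR 0 < IZR n) as H%lt_IZR by lra. lia. }
    destruct (exists_shift_into x lo) as [k Hk].
    destruct (Rlt_dec (x + IZR k) hi).
    + apply (Hfree (x + IZR k)); [lra | apply HPX, Xx].
    + apply Sx, (HPS x k), Hn. lra.
Qed.

Section GapOrbits.

Variables (a b : R -> R) (A B Bi : set).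
Hypotheses (Ha : homeo_lift a) (Hb : homeo_lift b).
Hypotheses (cA : closed_set A) (cB : closed_set B) (cBi : closed_set Bi).
Hypotheses (pA : periodic A) (pB : periodic B) (pBi : periodic Bi).
Hypotheses (nA : exists x, A x) (nB : exists x, B x).
Hypotheses (dAB : forall t, ~ (A t /\ B t)) (dABi : forall t, ~ (A t /\ Bi t)).
Hypotheses (bA : image b A = B) (bB : image b B = Bi).
Hypothesis no_consecutive_A : forall I J, is_comp A I -> is_comp A J -> ~ consecutive A B Bi I J.
Hypothesis no_consecutive_B : forall I J, is_comp B I -> is_comp B J -> ~ consecutive A B Bi I J.
Hypothesis no_consecutive_Bi : forall I J, is_comp Bi I -> is_comp Bi J -> ~ consecutive A B Bi I J.
Hypothesis principal_gaps_connected : forall J K,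
  principal_gap A B Bi J -> principal_gap A B Bi K -> clos_refl_sym_trans _ (pg_edge a b A B Bi) J K.

Local Notation X := (Xset A B Bi).
Local Notation Xi := (X_inf a b A B Bi).

Lemma Xset_closed : closed_set X.
Proof. repeat apply closed_set_or; assumption. Qed.

Lemma Xset_periodic : periodic X.
Proof. intros t n. unfold Xset. rewrite (pA t n), (pB t n), (pBi t n). reflexivity. Qed.

Lemma Xset_inhabited : exists x, X x.
Proof. destruct nA as [x Ax]. exists x. left. exact Ax. Qed.

Definition gap_orbit (p q : R) : Prop :=
  exists h, in_G a b h /\ component (compl Xi) (h p) = component (compl Xi) q.

Lemma image_component_in_G h x :
  in_G a b h -> image h (component (compl Xi) x) = component (compl Xi) (h x).
Proof.
  intros Hh. apply image_component.
  - exact (in_G_bij_lift a b h Ha Hb Hh).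
  - exact (compl_periodic _ (X_inf_periodic a b A B Bi Ha Hb Xset_periodic)).
  - intros t. unfold compl. rewrite (X_inf_invariant a b A B Bi h Ha Hb Hh t). reflexivity.
Qed.

Lemma gap_orbit_refl p : gap_orbit p p.
Proof. exists (fun x => x). split; [apply G_id | reflexivity]. Qed.

Lemma gap_orbit_of_in_G h p : in_G a b h -> gap_orbit p (h p).
Proof. intros Hh. exists h. split; [exact Hh | reflexivity]. Qed.

Lemma gap_orbit_trans p q r : gap_orbit p q -> gap_orbit q r -> gap_orbit p r.
Proof.
  intros [h1 [H1 E1]] [h2 [H2 E2]]. exists (fun x => h2 (h1 x)). split; [apply G_comp; assumption|].
  rewrite <- (image_component_in_G h2 _ H2), E1, (image_component_in_G h2 _ H2). exact E2.
Qed.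

Lemma gap_orbit_sym p q : gap_orbit p q -> gap_orbit q p.
Proof.
  intros [h [Hh E]]. destruct (in_G_inv a b h Ha Hb Hh) as [g [Hg [Hgh _]]].
  exists g. split; [exact Hg|].
  rewrite <- (image_component_in_G g _ Hg), <- E, (image_component_in_G g _ Hg), Hgh.
  reflexivity.
Qed.

Lemma gap_orbit_same_X_gap x r r' :
  component (compl X) x r -> component (compl X) x r' -> gap_orbit r r'.
Proof.
  assert (Hsub : forall t, compl X t -> compl Xi t)
    by (intros t Ht HXi; apply Ht, (X_inf_subset a b), HXi).
  pose proof (compl_periodic _ (X_inf_periodic a b A B Bi Ha Hb Xset_periodic)) as HP.
  intros Hr Hr'. exists (fun x => x). split; [apply G_id|].
  rewrite (component_eq_of_mem _ x r HP), (component_eq_of_mem _ x r' HP);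
    [reflexivity | apply (component_mono _ _ _ _ Hsub); assumption ..].
Qed.

Lemma gap_orbit_pg_edge J K r r' : pg_edge a b A B Bi J K -> J r -> K r' -> gap_orbit r r'.
Proof.
  intros [[[x [_ ->]] _] [_ HK]] Hr Hr'.
  destruct HK as [->|[[_ ->]|[_ ->]]].
  - destruct Hr' as [z [Hz ->]]. apply (gap_orbit_trans r z).
    + exact (gap_orbit_same_X_gap x r z Hr Hz).
    + apply gap_orbit_of_in_G, G_a.
  - destruct Hr' as [z [Hz ->]]. apply (gap_orbit_trans r z).
    + exact (gap_orbit_same_X_gap x r z Hr Hz).
    + apply gap_orbit_of_in_G, G_b.
  - apply (gap_orbit_trans r (b r')).
    + exact (gap_orbit_same_X_gap x r (b r') Hr Hr').
    + apply gap_orbit_sym, gap_orbit_of_in_G, G_b.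
Qed.

Lemma principal_gap_inhabited J : principal_gap A B Bi J -> exists z, J z.
Proof. intros [[z [Hz ->]] _]. exists z. apply component_self, Hz. Qed.

Definition in_principal_gap (s : R) : Prop := exists J, principal_gap A B Bi J /\ J s.

Lemma gap_orbit_principal r r' : in_principal_gap r -> in_principal_gap r' -> gap_orbit r r'.
Proof.
  intros [J [PJ Hr]] [K [PK Hr']].
  pose proof (proj1 (clos_rst_rst1n_iff _ _ _ _) (principal_gaps_connected J K PJ PK)) as Hpath.
  clear PK. revert Hr' r Hr PJ. induction Hpath as [J|J L K Hedge _ IH]; intros Hr' r Hr PJ.
  - destruct PJ as [[x [_ ->]] _]. exact (gap_orbit_same_X_gap x r r' Hr Hr').
  - assert (PL : principal_gap A B Bi L) by (destruct Hedge as [[_ [PL _]]|[PL _]]; exact PL).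
    destruct (principal_gap_inhabited L PL) as [z Hz].
    apply (gap_orbit_trans r z); [|exact (IH Hr' z Hz PL)].
    destruct Hedge as [Hedge|Hedge].
    + exact (gap_orbit_pg_edge _ _ r z Hedge Hr Hz).
    + exact (gap_orbit_sym _ _ (gap_orbit_pg_edge _ _ z r Hedge Hz Hr)).
Qed.

Lemma principal_gap_of_ends lo hi s q w :
  is_gap X lo hi -> lo < s < hi -> q = lo /\ w = hi \/ q = hi /\ w = lo ->
  A q -> ~ A w -> in_principal_gap s.
Proof.
  intros Hg Hs Hqw Aq nAw. pose proof Hg as [_ [Xlo [Xhi Hfree]]].
  assert (Xw : X w) by (destruct Hqw as [[_ ->]|[_ ->]]; assumption).
  assert (HJ : exists J, (is_comp B J \/ is_comp Bi J) /\ J w).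
  { destruct Xw as [Aw|[Bw|Biw]]; [contradiction | exists (component B w) | exists (component Bi w)];
      (split; [|apply component_self; assumption]); [left | right]; apply is_comp_component; assumption. }
  destruct HJ as [J [HJ Jw]].
  exists (component (compl X) s). split; [|apply component_self, Hfree, Hs].
  split; [apply is_comp_component, Hfree, Hs|].
  exists (component A q), J. split; [apply is_comp_component, Aq|]. split; [exact HJ|].
  split; [apply (gap_touches_end X _ lo hi s q) | apply (gap_touches_end X _ lo hi s w)];
    first [exact Hg | exact Hs | tauto | apply component_self, Aq | exact Jw].
Qed.

Lemma gap_same_ends_consecutive (S : set) lo hi :
  periodic S -> (forall t, S t -> X t) -> (exists x, X x /\ ~ S x) ->
  is_gap X lo hi -> S lo -> S hi -> consecutive A B Bi (component S lo) (component S hi).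
Proof.
  intros HPS HSX HS Hg Slo Shi.
  split; [exact (gap_ends_distinct_components X S lo hi Xset_periodic HPS HSX HS Hg Slo)|].
  pose proof Hg as [Hlh [_ [_ Hfree]]].
  exists (component (compl X) ((lo + hi) / 2)).
  split; [apply is_comp_component, Hfree; lra|].
  split; [apply (gap_touches_end X _ lo hi _ lo) | apply (gap_touches_end X _ lo hi _ hi)];
    first [exact Hg | lra | tauto | apply component_self; assumption].
Qed.

Lemma pullback_avoids t : ~ X (b t) -> ~ A t /\ ~ B t.
Proof.
  intros Hbt. split; intros Ht; apply Hbt; right.
  - left. rewrite <- bA. exists t. split; [exact Ht | reflexivity].
  - right. rewrite <- bB. exists t. split; [exact Ht | reflexivity].
Qed.

Lemma pullback_gap_ends lo hi :
  is_gap X lo hi -> B lo /\ Bi hi \/ Bi lo /\ B hi ->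
  exists q u, A q /\ B u /\ forall t, strictly_between q u t -> lo < b t < hi.
Proof.
  intros [Hlh _] Hends.
  destruct (homeo_lift_bij b Hb) as [Hinc [_ [g [Hgb Hbg]]]].
  assert (Hpre : forall (S T : set) y, image b S = T -> T y -> S (g y))
    by (intros S T y <- [x [Sx ->]]; rewrite Hgb; exact Sx).
  destruct Hends as [[Bq Biu]|[Biu Bq]]; [exists (g lo), (g hi) | exists (g hi), (g lo)];
    (split; [eapply Hpre; eassumption|]); (split; [eapply Hpre; eassumption|]);
    intros t Ht; apply (strict_increasing_between b _ _ _ Hinc) in Ht; rewrite !Hbg in Ht;
    unfold strictly_between in Ht; lra.
Qed.

(* Nothing of A or B lies between the pulled-back ends q and u, so the gap of X
   starting at q towards u is principal. *)
Lemma pullback_principal_gap lo hi :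
  is_gap X lo hi -> B lo /\ Bi hi \/ Bi lo /\ B hi ->
  exists s, in_principal_gap s /\ lo < b s < hi.
Proof.
  intros Hg Hends. pose proof Hg as [_ [_ [_ Hfree]]].
  destruct (pullback_gap_ends lo hi Hg Hends) as [q [u [Aq [Bu Hbetween]]]].
  assert (Hclear : forall t, strictly_between q u t -> ~ A t /\ ~ B t)
    by (intros t Ht; apply pullback_avoids, Hfree, Hbetween, Ht).
  destruct (proj1 (closed_set_iff Bi) cBi q (fun H => dABi q (conj Aq H))) as [e [He Hball]].
  assert (Hqu : q <> u) by (intros <-; exact (dAB q (conj Aq Bu))).
  destruct (gap_beside X q u Xset_closed Xset_periodic (or_introl Aq) (or_intror (or_introl Bu)) Hqu)
    as [lo' [hi' [Hg' Hside]]].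
  { exists e. split; [exact He|]. intros t Ht Hbt [At|[Bt|Bit]].
    - exact (proj1 (Hclear t Hbt) At).
    - exact (proj2 (Hclear t Hbt) Bt).
    - exact (Hball t Ht Bit). }
  assert (HnA : forall w, q < w <= u \/ u <= w < q -> ~ A w).
  { intros w Hw. destruct (Req_dec w u) as [->|Hwu].
    - intros Au. exact (dAB u (conj Au Bu)).
    - apply Hclear. unfold strictly_between. lra. }
  pose proof Hg' as [Hlh' _].
  exists ((lo' + hi') / 2). split.
  - destruct Hside as [[-> Hhi']|[-> Hlo']].
    + apply (principal_gap_of_ends q hi' _ q hi'); [exact Hg' | lra | left; split; reflexivity | exact Aq |].
      apply HnA. lra.
    + apply (principal_gap_of_ends lo' q _ q lo'); [exact Hg' | lra | right; split; reflexivity | exact Aq |].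
      apply HnA. lra.
  - apply Hbetween. unfold strictly_between. lra.
Qed.

Lemma gap_ends_differ lo hi :
  is_gap X lo hi -> ~ (A lo /\ A hi) /\ ~ (B lo /\ B hi) /\ ~ (Bi lo /\ Bi hi).
Proof.
  intros Hg.
  assert (Hsame : forall S : set, periodic S -> (forall t, S t -> X t) -> (exists x, X x /\ ~ S x) ->
                  (forall I J, is_comp S I -> is_comp S J -> ~ consecutive A B Bi I J) ->
                  ~ (S lo /\ S hi)).
  { intros S HPS HSX HS Hnc [Slo Shi].
    apply (Hnc _ _ (is_comp_component S lo Slo) (is_comp_component S hi Shi)).
    apply gap_same_ends_consecutive; assumption. }
  destruct nA as [x Ax], nB as [y By].
  split; [|split]; apply Hsame; try assumption.
  - intros t At. left. exact At.
  - exists y. split; [right; left; exact By | intros Ay; exact (dAB y (conj Ay By))].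
  - intros t Bt. right. left. exact Bt.
  - exists x. split; [left; exact Ax | intros Bx; exact (dAB x (conj Ax Bx))].
  - intros t Bit. right. right. exact Bit.
  - exists x. split; [left; exact Ax | intros Bix; exact (dABi x (conj Ax Bix))].
Qed.

Lemma X_gap_orbit_principal p : ~ X p -> exists s, in_principal_gap s /\ gap_orbit p s.
Proof.
  intros Hp.
  destruct (gap_around X p Xset_closed Xset_periodic Xset_inhabited Hp) as [lo [hi [Hg Hp']]].
  pose proof Hg as [_ [Xlo [Xhi _]]].
  assert (Hmixed : forall q w, q = lo /\ w = hi \/ q = hi /\ w = lo -> A q -> ~ A w ->
                   exists s, in_principal_gap s /\ gap_orbit p s).
  { intros q w Hqw Aq nAw. exists p.
    split; [exact (principal_gap_of_ends lo hi p q w Hg Hp' Hqw Aq nAw) | apply gap_orbit_refl]. }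
  pose proof (gap_ends_differ lo hi Hg) as [nAA [nBB nBiBi]].
  assert (Hpulled : B lo /\ Bi hi \/ Bi lo /\ B hi -> exists s, in_principal_gap s /\ gap_orbit p s).
  { intros Hends. destruct (pullback_principal_gap lo hi Hg Hends) as [s [Ps Hbs]].
    exists s. split; [exact Ps|]. apply (gap_orbit_trans p (b s)).
    - apply (gap_orbit_same_X_gap p); [apply component_self, Hp | exact (gap_component X lo hi p _ Hg Hp' Hbs)].
    - apply gap_orbit_sym, gap_orbit_of_in_G, G_b. }
  destruct Xlo as [Alo|[Blo|Bilo]], Xhi as [Ahi|[Bhi|Bihi]].
  - exfalso. exact (nAA (conj Alo Ahi)).
  - apply (Hmixed lo hi); [left; split; reflexivity | exact Alo | intros Ahi; exact (dAB hi (conj Ahi Bhi))].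
  - apply (Hmixed lo hi); [left; split; reflexivity | exact Alo | intros Ahi; exact (dABi hi (conj Ahi Bihi))].
  - apply (Hmixed hi lo); [right; split; reflexivity | exact Ahi | intros Alo; exact (dAB lo (conj Alo Blo))].
  - exfalso. exact (nBB (conj Blo Bhi)).
  - apply Hpulled. left. split; assumption.
  - apply (Hmixed hi lo); [right; split; reflexivity | exact Ahi | intros Alo; exact (dABi lo (conj Alo Bilo))].
  - apply Hpulled. right. split; assumption.
  - exfalso. exact (nBiBi (conj Bilo Bihi)).
Qed.

Lemma X_inf_gap_orbit_principal x : ~ Xi x -> exists s, in_principal_gap s /\ gap_orbit x s.
Proof.
  intros Hx. apply not_all_ex_not in Hx as [f Hf]. apply imply_to_and in Hf as [Hf HXf].
  destruct (X_gap_orbit_principal (f x) HXf) as [s [Ps Hs]].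
  exists s. split; [exact Ps|]. exact (gap_orbit_trans x (f x) s (gap_orbit_of_in_G f x Hf) Hs).
Qed.

Theorem X_inf_gaps_single_orbit U V :
  is_comp (compl Xi) U -> is_comp (compl Xi) V -> exists f, in_G a b f /\ image f U = V.
Proof.
  intros [x [Hx ->]] [y [Hy ->]].
  destruct (X_inf_gap_orbit_principal x Hx) as [s [Ps Hxs]].
  destruct (X_inf_gap_orbit_principal y Hy) as [s' [Ps' Hys']].
  pose proof (gap_orbit_trans _ _ _ Hxs (gap_orbit_principal s s' Ps Ps')) as Hxs'.
  destruct (gap_orbit_trans _ _ _ Hxs' (gap_orbit_sym _ _ Hys')) as [h [Hh E]].
  exists h. split; [exact Hh|].
  change (image h (component (compl Xi) x) = component (compl Xi) y).
  rewrite image_component_in_G by exact Hh. exact E.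
Qed.

End GapOrbits.

Theorem lemma10p8 (a b : R -> R) (A B Bi : R -> Prop) :
  markov_system a b A B Bi ->
  forall U V : R -> Prop,
    is_comp (compl (X_inf a b A B Bi)) U ->
    is_comp (compl (X_inf a b A B Bi)) V ->
    exists f, in_G a b f /\ image f U = V.
Proof.
  intros [Ha [Hb [_ [_ [dAB [dABi [_ [[k [Hk [uA [uB uBi]]]]
           [ncA [ncB [ncBi [_ [bA [bB [_ [_ Hconn]]]]]]]]]]]]]]]].
  eapply X_inf_gaps_single_orbit;
    eauto using union_of_arcs_closed, union_of_arcs_periodic, union_of_arcs_inhabited.
Qed.
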